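(* Let $P^1(z) = \tfrac12 z(1+z)$, $P^2(z) = z(1+z)$, and let $U^2$ be an attracting petal of $P^2$ at its parabolic fixed point $0$ as described in the context. Let $V$ be an open subset of $\mathrm D(0,\tfrac13)$ and let $\varepsilon > 0$. Then there exists $m_0$ such that for every $m \ge m_0$ and every $z_0 \in (P^1)^{\circ m}(V)$, \[ \mathrm m\Big(V \cap (P^1)^{\circ -m}\big((\mathbb C \setminus U^2) + z_0\big)\Big) < \varepsilon. \]
   Context: $\mathrm m$ is two-dimensional Lebesgue measure, $\mathrm D(a,r)$ is the open disc of centre $a$ and radius $r$, $(P^1)^{\circ m}$ is the $m$-fold iterate and $(P^1)^{\circ -m}(X)$ denotes the full preimage of $X$ under it. For $X \subset \mathbb C$ and $z_0 \in \mathbb C$, $X + z_0 = \{z \in \mathbb C : z - z_0 \in X\}$. The polynomial $P^2$ has a parabolic fixed point at $0$ with multiplier $1$, with attracting direction the negative real axis and repelling direction the positive real axis. $U^2$ is an open attracting petal for $P^2$ at $0$: an open set with $0 \in \partial U^2$, $P^2(U^2) \subset U^2$, on which $P^2$ is conformally conjugate to $z \mapsto z+1$, and such that $\mathbb C \setminus U^2$ has a cusp at $0$ in the direction of the positive real axis, i.e. for every $\theta > 0$ there is $r > 0$ with $\mathrm D(0,r) \setminus U^2 \subset \{0\} \cup \{z \ne 0 : |\arg z| < \theta\}$. *)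

From Stdlib Require Import Reals.
Open Scope R_scope.

Definition Cx := (R * R)%type.
Definition Cadd (z w : Cx) : Cx := (fst z + fst w, snd z + snd w).
Definition Csub (z w : Cx) : Cx := (fst z - fst w, snd z - snd w).
Definition Cmul (z w : Cx) : Cx :=
  (fst z * fst w - snd z * snd w, fst z * snd w + snd z * fst w).
Definition Cnorm (z : Cx) : R := sqrt (fst z * fst z + snd z * snd z).
Definition Czero : Cx := (0, 0).
Definition Cone : Cx := (1, 0).

Definition P2 (z : Cx) : Cx := Cmul z (Cadd Cone z).
Definition P1 (z : Cx) : Cx := Cmul (/2, 0) (P2 z).

Definition Cdisc (a : Cx) (r : R) (z : Cx) : Prop := Cnorm (Csub z a) < r.

Definition Cis_open (U : Cx -> Prop) : Prop :=
  forall z, U z -> exists r, 0 < r /\ forall w, Cdisc z r w -> U w.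

Definition Cin_closure (U : Cx -> Prop) (a : Cx) : Prop :=
  forall r, 0 < r -> exists w, U w /\ Cdisc a r w.

Definition C_differentiable_at (U : Cx -> Prop) (f : Cx -> Cx) (z : Cx) : Prop :=
  exists L : Cx, forall eps, 0 < eps -> exists delta, 0 < delta /\
    forall h, 0 < Cnorm h < delta -> U (Cadd z h) ->
      Cnorm (Csub (Csub (f (Cadd z h)) (f z)) (Cmul L h)) <= eps * Cnorm h.

Definition abs_arg_lt (z : Cx) (theta : R) : Prop :=
  exists t, -PI < t <= PI /\ Rabs t < theta /\
    fst z = Cnorm z * cos t /\ snd z = Cnorm z * sin t.

Definition attracting_petal_P2 (U : Cx -> Prop) : Prop :=
  Cis_open U /\
  ~ U Czero /\ Cin_closure U Czero /\
  (forall z, U z -> U (P2 z)) /\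
  (exists phi : Cx -> Cx,
      (forall z, U z -> C_differentiable_at U phi z) /\
      (forall z w, U z -> U w -> phi z = phi w -> z = w) /\
      (forall z, U z -> phi (P2 z) = Cadd (phi z) Cone)) /\
  (forall theta, 0 < theta -> exists r, 0 < r /\
      forall z, Cdisc Czero r z -> ~ U z -> z = Czero \/ (z <> Czero /\ abs_arg_lt z theta)).

(* Two-dimensional Lebesgue (outer) measure of A is < eps: A is covered by
   countably many rectangles [a,b) x [c,d) whose total area is < eps. *)
Definition m2_lt (A : Cx -> Prop) (eps : R) : Prop :=
  exists (a b c d : nat -> R) (s : R),
    (forall n, a n <= b n /\ c n <= d n) /\
    (forall z, A z -> exists n, a n <= fst z < b n /\ c n <= snd z < d n) /\
    infinite_sum (fun n => (b n - a n) * (d n - c n)) s /\ s < eps.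

From Stdlib Require Import Reals Arith Lra Lia Psatz Classical IndefiniteDescription.
From Coquelicot Require Complex.
Open Scope R_scope.

(* Write w(z) = P1^m(z) - P1^m(v) for the displacement of the orbit of z from
   that of a base point v in D(0,1/3).  Near 0 the complement of the petal U2
   lies in a thin sector |arg w| < th; since P1 contracts D(0,2/5) by 7/10,
   for m large every z with w(z) outside U2 lies in the "flat set"
   {z : |Im w(z)| <= th |w(z)|}.  It therefore suffices to show that the flat
   set has small outer measure once th is small, uniformly in m and v.
   (Only the inclusion of V in D(0,1/3) is used, not its openness.)

   The divided difference of P1^m is a product of divided differences of P1
   along the two orbits; a perturbation estimate for products shows that it
   has bounded distortion, independently of m.  Hence on each square of a
   fine grid P1^m is almost affine, w(z) ~ L z + b, and the flat set is thin in
   the direction in which moving tilts w away from the real axis.  Cutting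
   each square into N strips across that direction, each strip meets the flat
   set inside one rectangle of height O(th + 1/N), and the total area of all
   these rectangles is O(th + 1/N). *)

Ltac cx_ring :=
  unfold Cadd, Csub, Cmul, Cone, Czero;
  apply injective_projections; simpl; field.

Lemma Cnorm_Cmod z : Cnorm z = Complex.Cmod z.
Proof. unfold Cnorm, Complex.Cmod. f_equal. simpl. ring. Qed.

Lemma Cnorm_nonneg z : 0 <= Cnorm z.
Proof. unfold Cnorm; apply sqrt_pos. Qed.

Lemma Cnorm_mul a b : Cnorm (Cmul a b) = Cnorm a * Cnorm b.
Proof. rewrite !Cnorm_Cmod. apply (Complex.Cmod_mult a b). Qed.

Lemma Cnorm_add a b : Cnorm (Cadd a b) <= Cnorm a + Cnorm b.
Proof. rewrite !Cnorm_Cmod. apply (Complex.Cmod_triangle a b). Qed.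

Lemma Cnorm_real x : Cnorm (x, 0) = Rabs x.
Proof. unfold Cnorm; simpl. rewrite <- sqrt_Rsqr_abs. unfold Rsqr. f_equal. ring. Qed.

Lemma Cnorm_imag y : Cnorm (0, y) = Rabs y.
Proof. unfold Cnorm; simpl. rewrite <- sqrt_Rsqr_abs. unfold Rsqr. f_equal. ring. Qed.

Lemma Cnorm_one : Cnorm Cone = 1.
Proof. unfold Cone. rewrite Cnorm_real. apply Rabs_R1. Qed.

Lemma Cnorm_fst z : Rabs (fst z) <= Cnorm z.
Proof. rewrite Cnorm_Cmod. eapply Rle_trans; [apply Rmax_l | apply Complex.Rmax_Cmod]. Qed.

Lemma Cnorm_snd z : Rabs (snd z) <= Cnorm z.
Proof. rewrite Cnorm_Cmod. eapply Rle_trans; [apply Rmax_r | apply Complex.Rmax_Cmod]. Qed.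

Lemma Cnorm_sq z : Cnorm z * Cnorm z = fst z * fst z + snd z * snd z.
Proof. unfold Cnorm. apply sqrt_sqrt. nra. Qed.

Lemma Cnorm_le_coords z : Cnorm z <= Rabs (fst z) + Rabs (snd z).
Proof.
  replace z with (Cadd (fst z, 0) (0, snd z)) at 1 by cx_ring.
  rewrite <- Cnorm_real, <- Cnorm_imag. apply Cnorm_add.
Qed.

Lemma Cnorm_sub_le a b : Cnorm (Csub a b) <= Cnorm a + Cnorm b.
Proof.
  replace (Csub a b) with (Cadd a (Cmul (-1, 0) b)) by cx_ring.
  eapply Rle_trans; [apply Cnorm_add|].
  rewrite Cnorm_mul, Cnorm_real, Rabs_left by lra. lra.
Qed.

Lemma Cnorm_sub_sym a b : Cnorm (Csub a b) = Cnorm (Csub b a).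
Proof.
  replace (Csub a b) with (Cmul (-1, 0) (Csub b a)) by cx_ring.
  rewrite Cnorm_mul, Cnorm_real, Rabs_left by lra. ring.
Qed.

Lemma Cnorm_near a b : Cnorm b <= Cnorm a + Cnorm (Csub b a).
Proof. replace b with (Cadd a (Csub b a)) at 1 by cx_ring. apply Cnorm_add. Qed.

Lemma Cdisc_origin r z : Cdisc Czero r z <-> Cnorm z < r.
Proof. unfold Cdisc. replace (Csub z Czero) with z by cx_ring. tauto. Qed.

Lemma pow_le_one x k : 0 <= x <= 1 -> 0 <= x ^ k <= 1.
Proof. intros Hx. rewrite <- (pow1 k). split; [apply pow_le | apply pow_incr]; lra. Qed.

Lemma exp_monotone x y : x <= y -> exp x <= exp y.
Proof.
  intros [Hlt|Heq]; [left; apply exp_increasing, Hlt | right; rewrite Heq; reflexivity].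
Qed.

Lemma Rabs_sub_via a b c : Rabs (a - b) <= Rabs (c - a) + Rabs c + Rabs b.
Proof. unfold Rabs; repeat destruct Rcase_abs; lra. Qed.

Definition orbit (k : nat) (z : Cx) : Cx := Nat.iter k P1 z.

Lemma orbit_S k z : orbit (S k) z = P1 (orbit k z).
Proof. reflexivity. Qed.

Definition P1_slope (a b : Cx) : Cx := Cmul (/2, 0) (Cadd (Cadd Cone a) b).

Lemma P1_sub a b : Csub (P1 a) (P1 b) = Cmul (Csub a b) (P1_slope a b).
Proof. unfold P1, P2, P1_slope. cx_ring. Qed.

Fixpoint Cprod (f : nat -> Cx) (k : nat) : Cx :=
  match k with O => Cone | S k => Cmul (Cprod f k) (f k) end.

Definition slope (k : nat) (z w : Cx) : Cx :=
  Cprod (fun j => P1_slope (orbit j z) (orbit j w)) k.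

Lemma orbit_sub k z w : Csub (orbit k z) (orbit k w) = Cmul (Csub z w) (slope k z w).
Proof.
  induction k as [|k IH]; unfold slope; simpl Cprod.
  - unfold orbit; simpl. cx_ring.
  - rewrite !orbit_S, P1_sub, IH. unfold slope. cx_ring.
Qed.

Lemma P1_contract a : Cnorm a <= 2/5 -> Cnorm (P1 a) <= 7/10 * Cnorm a.
Proof.
  intros Ha.
  replace (P1 a) with (Cmul (/2, 0) (Cmul a (Cadd Cone a))) by (unfold P1, P2; cx_ring).
  rewrite !Cnorm_mul, Cnorm_real, Rabs_pos_eq by lra.
  pose proof (Cnorm_add Cone a) as Htri. rewrite Cnorm_one in Htri.
  pose proof (Cnorm_nonneg a). pose proof (Cnorm_nonneg (Cadd Cone a)). nra.
Qed.

Lemma orbit_contract k z : Cnorm z <= 2/5 -> Cnorm (orbit k z) <= (7/10)^k * Cnorm z.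
Proof.
  intros Hz. pose proof (Cnorm_nonneg z).
  induction k as [|k IH]; [unfold orbit; simpl; lra|].
  assert (Hp : (7/10)^k <= 1) by (apply pow_le_one; lra).
  assert (Hk : Cnorm (orbit k z) <= 2/5) by (pose proof (pow_le (7/10) k); nra).
  rewrite orbit_S. simpl pow. pose proof (P1_contract _ Hk). nra.
Qed.

Lemma orbit_stays k z : Cnorm z <= 2/5 -> Cnorm (orbit k z) <= 2/5.
Proof.
  intros Hz. pose proof (orbit_contract k z Hz). pose proof (Cnorm_nonneg z).
  assert ((7/10)^k <= 1) by (apply pow_le_one; lra). pose proof (pow_le (7/10) k). nra.
Qed.

Lemma P1_slope_bounds a b : Cnorm a <= 2/5 -> Cnorm b <= 2/5 ->
  1/10 <= Cnorm (P1_slope a b) <= 9/10.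
Proof.
  intros Ha Hb. unfold P1_slope. rewrite Cnorm_mul, Cnorm_real, Rabs_pos_eq by lra.
  pose proof (Cnorm_add (Cadd Cone a) b). pose proof (Cnorm_add Cone a).
  pose proof (Cnorm_near (Cadd (Cadd Cone a) b) Cone) as Hlow.
  replace (Csub Cone (Cadd (Cadd Cone a) b)) with (Cmul (-1, 0) (Cadd a b)) in Hlow by cx_ring.
  rewrite Cnorm_mul, Cnorm_real, Rabs_left, Cnorm_one in Hlow by lra.
  pose proof (Cnorm_add a b). rewrite Cnorm_one in *. lra.
Qed.

Lemma slope_bounds k z w : Cnorm z <= 2/5 -> Cnorm w <= 2/5 ->
  (1/10)^k <= Cnorm (slope k z w) <= (9/10)^k.
Proof.
  intros Hz Hw. induction k as [|k IH]; unfold slope in *; simpl Cprod; simpl pow.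
  - rewrite Cnorm_one; lra.
  - rewrite Cnorm_mul.
    pose proof (P1_slope_bounds _ _ (orbit_stays k z Hz) (orbit_stays k w Hw)).
    pose proof (pow_le (1/10) k). nra.
Qed.

Lemma Cmul_perturb X Y a b S e : 0 <= S -> 0 <= e ->
  Cnorm (Csub X Y) <= Cnorm Y * (exp S - 1) -> Cnorm (Csub a b) <= e * Cnorm b ->
  Cnorm (Csub (Cmul X a) (Cmul Y b)) <= Cnorm (Cmul Y b) * (exp (S + e) - 1).
Proof.
  intros HS He HXY Hab.
  replace (Csub (Cmul X a) (Cmul Y b)) with (Cadd (Cmul (Csub X Y) a) (Cmul Y (Csub a b)))
    by cx_ring.
  eapply Rle_trans; [apply Cnorm_add|]. rewrite !Cnorm_mul, exp_plus.
  pose proof (Cnorm_near b a). pose proof (exp_ineq1_le e). pose proof (exp_ineq1_le S).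
  pose proof (Cnorm_nonneg Y). pose proof (Cnorm_nonneg b). pose proof (Cnorm_nonneg a).
  pose proof (Cnorm_nonneg (Csub X Y)).
  assert (Hfirst : Cnorm (Csub X Y) * Cnorm a <= Cnorm Y * (exp S - 1) * (Cnorm b * (1 + e)))
    by (apply Rmult_le_compat; lra).
  assert (Hsecond : Cnorm Y * Cnorm (Csub a b) <= Cnorm Y * (e * Cnorm b))
    by (apply Rmult_le_compat_l; lra).
  assert (Hexp : 0 <= Cnorm Y * Cnorm b * exp S * (exp e - (1 + e)))
    by (pose proof (exp_pos S); apply Rmult_le_pos; [nra | lra]).
  nra.
Qed.

Lemma Cprod_perturb (x y : nat -> Cx) (eps rho : R) (k : nat) :
  0 <= eps -> 0 <= rho < 1 ->
  (forall j, Cnorm (Csub (x j) (y j)) <= eps * rho ^ j * Cnorm (y j)) ->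
  Cnorm (Csub (Cprod x k) (Cprod y k)) <= Cnorm (Cprod y k) * (exp (eps / (1 - rho)) - 1).
Proof.
  intros Heps Hrho Hxy.
  (* after n factors the exponent is the partial geometric sum [part n] *)
  set (part n := eps * (1 - rho ^ n) / (1 - rho)).
  assert (Hpart : forall n, 0 <= part n <= eps / (1 - rho)).
  { intros n. unfold part, Rdiv. pose proof (pow_le_one rho n ltac:(lra)).
    assert (0 <= / (1 - rho)) by (left; apply Rinv_0_lt_compat; lra).
    split; [apply Rmult_le_pos | apply Rmult_le_compat_r]; nra. }
  assert (Hstep : forall n,
    Cnorm (Csub (Cprod x n) (Cprod y n)) <= Cnorm (Cprod y n) * (exp (part n) - 1)).
  { induction n as [|n IH]; simpl Cprod.
    - replace (Csub Cone Cone) with (0, 0) by cx_ring.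
      replace (part O) with 0 by (unfold part; simpl pow; field; lra).
      rewrite Cnorm_real, Rabs_R0, exp_0. lra.
    - replace (part (S n)) with (part n + eps * rho ^ n) by (unfold part; simpl pow; field; lra).
      apply Cmul_perturb; auto; [apply Hpart|].
      pose proof (pow_le rho n). nra. }
  eapply Rle_trans; [apply Hstep|].
  apply Rmult_le_compat_l; [apply Cnorm_nonneg|].
  assert (exp (part k) <= exp (eps / (1 - rho))) by (apply exp_monotone, Hpart). lra.
Qed.

Lemma slope_distortion k z w p q :
  Cnorm z <= 2/5 -> Cnorm w <= 2/5 -> Cnorm p <= 2/5 -> Cnorm q <= 2/5 ->
  Cnorm (Csub (slope k z w) (slope k p q)) <=
  Cnorm (slope k p q) * (exp (50 * (Cnorm (Csub z p) + Cnorm (Csub w q))) - 1).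
Proof.
  intros Hz Hw Hp Hq.
  set (d := Cnorm (Csub z p) + Cnorm (Csub w q)).
  assert (Hd : 0 <= d) by (unfold d; pose proof (Cnorm_nonneg (Csub z p));
                            pose proof (Cnorm_nonneg (Csub w q)); lra).
  replace (50 * d) with (5 * d / (1 - 9/10)) by field.
  apply Cprod_perturb; [lra | lra |].
  intros j.
  replace (Csub (P1_slope (orbit j z) (orbit j w)) (P1_slope (orbit j p) (orbit j q)))
    with (Cmul (/2, 0) (Cadd (Csub (orbit j z) (orbit j p)) (Csub (orbit j w) (orbit j q))))
    by (unfold P1_slope; cx_ring).
  rewrite Cnorm_mul, Cnorm_real, Rabs_pos_eq by lra.
  eapply Rle_trans; [apply Rmult_le_compat_l; [lra | apply Cnorm_add]|].
  rewrite !orbit_sub, !Cnorm_mul.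
  pose proof (slope_bounds j z p Hz Hp). pose proof (slope_bounds j w q Hw Hq).
  pose proof (P1_slope_bounds _ _ (orbit_stays j p Hp) (orbit_stays j q Hq)).
  pose proof (Cnorm_nonneg (Csub z p)). pose proof (Cnorm_nonneg (Csub w q)).
  assert (Hsum : Cnorm (Csub z p) * Cnorm (slope j z p) + Cnorm (Csub w q) * Cnorm (slope j w q)
                 <= (9/10)^j * d) by (unfold d; nra).
  assert (0 <= d * (9/10)^j) by (pose proof (pow_le (9/10) j); nra).
  nra.
Qed.

Definition cell : R := 1/1000.
Definition Kdist : R := exp 50.

Lemma Kdist_pos : 0 < Kdist.
Proof. apply exp_pos. Qed.

(* The numerical bound behind the 1/4 in [slope_near_center]. *)
Lemma exp_tenth : exp (1/10) <= 5/4.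
Proof.
  pose proof (exp_ineq1_le (-(1/10))) as Hlow.
  pose proof (exp_plus (1/10) (-(1/10))) as Hprod.
  replace (1/10 + - (1/10)) with 0 in Hprod by ring. rewrite exp_0 in Hprod.
  pose proof (exp_pos (1/10)). nra.
Qed.

Lemma near_center_small z c :
  Cnorm (Csub z c) <= cell -> Cnorm c <= 1/3 + cell -> Cnorm z <= 2/5.
Proof. intros Hz Hc. pose proof (Cnorm_near c z). unfold cell in *. lra. Qed.

Lemma slope_near_center m z1 z2 c :
  Cnorm (Csub z1 c) <= cell -> Cnorm (Csub z2 c) <= cell -> Cnorm c <= 1/3 + cell ->
  Cnorm (Csub (slope m z1 z2) (slope m c c)) <= Cnorm (slope m c c) / 4.
Proof.
  intros H1 H2 Hc.
  assert (Hc' : Cnorm c <= 2/5) by (unfold cell in *; lra).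
  eapply Rle_trans;
    [apply slope_distortion; eauto using near_center_small|].
  assert (exp (50 * (Cnorm (Csub z1 c) + Cnorm (Csub z2 c))) <= exp (1/10))
    by (apply exp_monotone; unfold cell in *; lra).
  pose proof exp_tenth. pose proof (Cnorm_nonneg (slope m c c)). nra.
Qed.

Lemma slope_far m z v c :
  Cnorm (Csub z c) <= cell -> Cnorm c <= 1/3 + cell -> Cnorm v < 1/3 ->
  Cnorm (slope m z v) <= Kdist * Cnorm (slope m c c).
Proof.
  intros Hz Hc Hv.
  assert (Hc' : Cnorm c <= 2/5) by (unfold cell in *; lra).
  pose proof (slope_distortion m z v c c (near_center_small _ _ Hz Hc) ltac:(lra) Hc' Hc').
  pose proof (Cnorm_near (slope m c c) (slope m z v)).
  pose proof (Cnorm_sub_le v c).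
  assert (exp (50 * (Cnorm (Csub z c) + Cnorm (Csub v c))) <= Kdist)
    by (apply exp_monotone; unfold cell in *; lra).
  pose proof (Cnorm_nonneg (slope m c c)). nra.
Qed.

Lemma slope_pos m c : Cnorm c <= 2/5 -> 0 < Cnorm (slope m c c).
Proof. intros Hc. pose proof (slope_bounds m c c Hc Hc). pose proof (pow_lt (1/10) m). lra. Qed.

Definition disp (m : nat) (v z : Cx) : Cx := Csub (orbit m z) (orbit m v).

Lemma disp_sub m v z1 z2 :
  Csub (disp m v z1) (disp m v z2) = Cmul (Csub z1 z2) (slope m z1 z2).
Proof. rewrite <- orbit_sub. unfold disp. cx_ring. Qed.

Definition flat_set (m : nat) (v : Cx) (th : R) (z : Cx) : Prop :=
  Cnorm z < 1/3 /\ Rabs (snd (disp m v z)) <= th * Cnorm (disp m v z).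

Lemma flat_Im_bound m v th z c : 0 <= th -> Cnorm v < 1/3 -> flat_set m v th z ->
  Cnorm (Csub z c) <= cell -> Cnorm c <= 1/3 + cell ->
  Rabs (snd (disp m v z)) <= th * Kdist * Cnorm (slope m c c).
Proof.
  intros Hth Hv [Hz Hflat] Hzc Hc.
  eapply Rle_trans; [apply Hflat|]. rewrite Rmult_assoc. apply Rmult_le_compat_l; [lra|].
  unfold disp. rewrite orbit_sub, Cnorm_mul.
  pose proof (slope_far m z v c Hzc Hc Hv). pose proof (Cnorm_sub_le z v).
  pose proof (Cnorm_nonneg (Csub z v)). pose proof (Cnorm_nonneg (slope m z v)). nra.
Qed.

(* Near a center c the m-th iterate is almost the
   linear map z |-> L z with L = slope m c c.  If moving in the direction u
   tilts the displacement transversally to the real axis (|Im (u L)| >= |L|/2),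
   then two points of [flat_set] that differ by s u up to an error of size h
   satisfy |s| <= 8 th Kdist + 5 h: the flat set is thin in the direction u. *)
Lemma transversal_bound m v th c u s h z1 z2 :
  0 <= th -> Cnorm v < 1/3 -> Cnorm c <= 1/3 + cell -> Cnorm u = 1 ->
  Cnorm (slope m c c) / 2 <= Rabs (snd (Cmul u (slope m c c))) ->
  flat_set m v th z1 -> flat_set m v th z2 ->
  Cnorm (Csub z1 c) <= cell -> Cnorm (Csub z2 c) <= cell ->
  Cnorm (Csub (Cadd z1 (Cmul (s, 0) u)) c) <= cell ->
  Cnorm (Csub z2 (Cadd z1 (Cmul (s, 0) u))) <= h ->
  Rabs s <= 8 * th * Kdist + 5 * h.
Proof.
  intros Hth Hv Hc Hu Htilt F1 F2 H1 H2 H3 Hh.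
  set (L := slope m c c) in *. set (z3 := Cadd z1 (Cmul (s, 0) u)) in *.
  assert (HL : 0 < Cnorm L) by (apply slope_pos; unfold cell in *; lra).
  pose proof (flat_Im_bound m v th z1 c Hth Hv F1 H1 Hc) as G1.
  pose proof (flat_Im_bound m v th z2 c Hth Hv F2 H2 Hc) as G2. fold L in G1, G2.
  set (E1 := slope m z3 z1). set (E2 := slope m z2 z3).
  assert (HE1 : Cnorm (Csub E1 L) <= Cnorm L / 4) by (apply slope_near_center; auto).
  assert (HE2 : Cnorm (Csub E2 L) <= Cnorm L / 4) by (apply slope_near_center; auto).
  assert (Hrise : snd (disp m v z3) - snd (disp m v z1) = s * snd (Cmul u E1)).
  { transitivity (snd (Csub (disp m v z3) (disp m v z1))); [unfold Csub; simpl; ring|].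
    rewrite disp_sub. fold E1.
    replace (Csub z3 z1) with (Cmul (s, 0) u) by (unfold z3; cx_ring).
    unfold Cmul; simpl; ring. }
  assert (HuE1 : Cnorm L / 4 <= Rabs (snd (Cmul u E1))).
  { replace (snd (Cmul u E1)) with (snd (Cmul u L) + snd (Cmul u (Csub E1 L)))
      by (unfold Cmul, Csub; simpl; ring).
    pose proof (Cnorm_snd (Cmul u (Csub E1 L))) as Herr. rewrite Cnorm_mul, Hu in Herr.
    revert Htilt Herr. unfold Rabs; repeat destruct Rcase_abs; lra. }
  assert (Hstep : Cnorm (Csub (disp m v z2) (disp m v z3)) <= 5/4 * h * Cnorm L).
  { rewrite disp_sub, Cnorm_mul. fold E2.
    assert (Cnorm E2 <= 5/4 * Cnorm L) by (pose proof (Cnorm_near L E2); lra).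
    replace (5/4 * h * Cnorm L) with (h * (5/4 * Cnorm L)) by ring.
    apply Rmult_le_compat; auto using Cnorm_nonneg. }
  assert (Hsnd : Rabs (snd (disp m v z2) - snd (disp m v z3))
                 <= Cnorm (Csub (disp m v z2) (disp m v z3)))
    by exact (Cnorm_snd (Csub (disp m v z2) (disp m v z3))).
  assert (Hrise_le : Rabs s * (Cnorm L / 4) <= 2 * th * Kdist * Cnorm L + 5/4 * h * Cnorm L).
  { eapply Rle_trans; [apply Rmult_le_compat_l; [apply Rabs_pos | exact HuE1]|].
    rewrite <- Rabs_mult, <- Hrise.
    pose proof (Rabs_sub_via (snd (disp m v z3)) (snd (disp m v z1)) (snd (disp m v z2))).
    lra. }
  apply Rmult_le_reg_r with (Cnorm L / 4); [lra|]. lra.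
Qed.

Record rect := Rect { rx0 : R; rx1 : R; ry0 : R; ry1 : R }.

Definition in_rect (r : rect) (z : Cx) : Prop :=
  rx0 r <= fst z < rx1 r /\ ry0 r <= snd z < ry1 r.
Definition proper_rect (r : rect) : Prop := rx0 r <= rx1 r /\ ry0 r <= ry1 r.
Definition rect_area (r : rect) : R := (rx1 r - rx0 r) * (ry1 r - ry0 r).

Definition rect_cover (A : Cx -> Prop) (T : nat) (a : R) : Prop :=
  exists f : nat -> rect,
    (forall n, (n < T)%nat -> proper_rect (f n) /\ rect_area (f n) = a) /\
    (forall z, A z -> exists n, (n < T)%nat /\ in_rect (f n) z).

Lemma rect_cover_single (A : Cx -> Prop) (r : rect) (a : R) :
  proper_rect r -> rect_area r = a -> (forall z, A z -> in_rect r z) -> rect_cover A 1 a.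
Proof.
  intros Hr Ha HA. exists (fun _ => r). split.
  - intros n _. auto.
  - intros z Hz. exists O. split; [lia | auto].
Qed.

Lemma rect_cover_anchored (S : Cx -> Prop) (around : Cx -> rect) (a : R) :
  0 <= a -> (forall q, proper_rect (around q) /\ rect_area (around q) = a) ->
  (forall q p, S q -> S p -> in_rect (around q) p) -> rect_cover S 1 a.
Proof.
  intros Ha Haround Hin. destruct (classic (exists q, S q)) as [[q Sq]|Hempty].
  - apply rect_cover_single with (around q); try apply Haround. intros p Sp. auto.
  - apply rect_cover_single with (Rect 0 a 0 1).
    + unfold proper_rect; simpl; lra.
    + unfold rect_area; simpl; ring.
    + intros p Sp. exfalso. eauto.
Qed.

Lemma rect_cover_union (A : Cx -> Prop) (B : nat -> Cx -> Prop) (K T : nat) (a : R) :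
  (forall k, (k < K)%nat -> rect_cover (B k) T a) ->
  (forall z, A z -> exists k, (k < K)%nat /\ B k z) ->
  rect_cover A (K * T) a.
Proof.
  intros HB HA.
  destruct (functional_choice (fun k (f : nat -> rect) =>
      (k < K)%nat ->
      (forall n, (n < T)%nat -> proper_rect (f n) /\ rect_area (f n) = a) /\
      (forall z, B k z -> exists n, (n < T)%nat /\ in_rect (f n) z))) as [g Hg].
  { intros k. destruct (Nat.lt_ge_cases k K) as [Hk|Hk].
    - destruct (HB k Hk) as [f Hf]. exists f. auto.
    - exists (fun _ => Rect 0 0 0 0). lia. }
  exists (fun n => g (n / T)%nat (n mod T)%nat). split.
  - intros n Hn.
    assert (HT : T <> O) by (intros ->; lia).
    assert (Hk : (n / T < K)%nat) by (apply Nat.Div0.div_lt_upper_bound; nia).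
    apply (proj1 (Hg _ Hk)).
    apply Nat.mod_upper_bound, HT.
  - intros z Hz. destruct (HA z Hz) as [k [Hk Bz]].
    destruct (proj2 (Hg k Hk) z Bz) as [n [Hn Hin]].
    exists (k * T + n)%nat. split; [nia|].
    rewrite Nat.div_add_l, Nat.div_small, Nat.add_0_r by lia.
    rewrite Nat.add_comm, Nat.Div0.mod_add, Nat.mod_small by lia. exact Hin.
Qed.

Lemma rect_cover_union1 (A : Cx -> Prop) (B : nat -> Cx -> Prop) (K : nat) (a : R) :
  (forall k, (k < K)%nat -> rect_cover (B k) 1 a) ->
  (forall z, A z -> exists k, (k < K)%nat /\ B k z) ->
  rect_cover A K a.
Proof. intros HB HA. rewrite <- (Nat.mul_1_r K). apply rect_cover_union with B; auto. Qed.

Lemma infinite_sum_finite (f : nat -> R) (T : nat) (c : R) :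
  (forall n, (n < T)%nat -> f n = c) -> (forall n, (T <= n)%nat -> f n = 0) ->
  infinite_sum f (INR T * c).
Proof.
  intros Hlow Hhigh.
  assert (Hpartial : forall n, sum_f_R0 f n = INR (Nat.min (S n) T) * c).
  { induction n as [|n IH]; simpl sum_f_R0.
    - destruct T; simpl; [rewrite Hhigh by lia | rewrite Hlow by lia]; simpl; ring.
    - rewrite IH. destruct (Nat.lt_ge_cases (S n) T).
      + rewrite Hlow by auto. replace (Nat.min (S (S n)) T) with (S (Nat.min (S n) T)) by lia.
        rewrite S_INR. ring.
      + rewrite Hhigh by auto. replace (Nat.min (S (S n)) T) with (Nat.min (S n) T) by lia. ring. }
  intros eps Heps. exists T. intros n Hn. rewrite Hpartial.
  replace (Nat.min (S n) T) with T by lia. unfold Rdist. rewrite Rminus_diag, Rabs_R0. lra.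
Qed.

Lemma rect_cover_measure (A : Cx -> Prop) (T : nat) (a eps : R) :
  rect_cover A T a -> INR T * a < eps -> m2_lt A eps.
Proof.
  intros [f [Hf HA]] Heps.
  set (g n := if lt_dec n T then f n else Rect 0 0 0 0).
  exists (fun n => rx0 (g n)), (fun n => rx1 (g n)), (fun n => ry0 (g n)),
    (fun n => ry1 (g n)), (INR T * a).
  split; [|split; [|split; [|exact Heps]]].
  - intros n. unfold g. destruct (lt_dec n T) as [Hn|Hn]; [apply Hf, Hn | simpl; lra].
  - intros z Hz. destruct (HA z Hz) as [n [Hn Hin]]. exists n.
    unfold g. destruct (lt_dec n T); [exact Hin | contradiction].
  - apply infinite_sum_finite; intros n Hn; unfold g; destruct (lt_dec n T); try lia.
    + apply Hf; auto.
    + simpl; ring.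
Qed.

Lemma m2_lt_mono (A B : Cx -> Prop) (eps : R) :
  (forall z, B z -> A z) -> m2_lt A eps -> m2_lt B eps.
Proof.
  intros Hsub (a & b & c & d & s & Hab & HA & Hsum & Hs).
  exists a, b, c, d, s. split; [exact Hab | split; [|split; [exact Hsum | exact Hs]]].
  intros z Hz. apply HA, Hsub, Hz.
Qed.

Definition grid_size : nat := 1000.
Definition grid_lo (i : nat) : R := -1/2 + INR i * cell.
Definition square_center (i j : nat) : Cx := (grid_lo i + cell/2, grid_lo j + cell/2).
Definition in_square (i j : nat) (p : Cx) : Prop :=
  grid_lo i <= fst p < grid_lo i + cell /\ grid_lo j <= snd p < grid_lo j + cell.

(* Each square is cut into N strips of width [cell / N]; the flat set meets a
   strip in a set of height at most [thickness th N] (see [flat_thin_vertical]). *)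
Definition width (N : nat) : R := cell / INR N.
Definition thickness (th : R) (N : nat) : R := 8 * th * Kdist + 6 * width N.

Lemma INR_grid_size : INR grid_size = 1000.
Proof. unfold grid_size. rewrite INR_IZR_INZ. reflexivity. Qed.

Lemma grid_index (M : nat) (t w : R) : 0 < w -> 0 <= t < INR M * w ->
  exists i, (i < M)%nat /\ INR i * w <= t < (INR i + 1) * w.
Proof.
  intros Hw. induction M as [|M IH]; intros [Hlow Hhigh]; [simpl in Hhigh; lra|].
  destruct (Rlt_dec t (INR M * w)) as [Hlt|Hge].
  - destruct IH as [i [Hi Hit]]; [lra|]. exists i. split; [lia | exact Hit].
  - exists M. split; [lia|]. rewrite S_INR in Hhigh. lra.
Qed.

Lemma in_square_near i j p : in_square i j p -> Cnorm (Csub p (square_center i j)) <= cell.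
Proof.
  intros [Hx Hy]. eapply Rle_trans; [apply Cnorm_le_coords|].
  unfold square_center; simpl.
  assert (Rabs (fst p - (grid_lo i + cell / 2)) <= cell / 2) by (apply Rabs_le; lra).
  assert (Rabs (snd p - (grid_lo j + cell / 2)) <= cell / 2) by (apply Rabs_le; lra).
  lra.
Qed.

Lemma square_center_small i j p :
  in_square i j p -> Cnorm p < 1/3 -> Cnorm (square_center i j) <= 1/3 + cell.
Proof.
  intros Hsq Hp. pose proof (Cnorm_near p (square_center i j)) as Htri.
  rewrite Cnorm_sub_sym in Htri. pose proof (in_square_near i j p Hsq). lra.
Qed.

Lemma Re_or_Im_large L : Cnorm L / 2 <= Rabs (fst L) \/ Cnorm L / 2 <= Rabs (snd L).
Proof.
  destruct (Rle_dec (Cnorm L / 2) (Rabs (fst L))) as [Hre|Hre]; [left; exact Hre | right].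
  pose proof (Cnorm_sq L). pose proof (Cnorm_nonneg L).
  pose proof (Rsqr_abs (fst L)). pose proof (Rsqr_abs (snd L)). unfold Rsqr in *.
  pose proof (Rabs_pos (fst L)). pose proof (Rabs_pos (snd L)). nra.
Qed.

Lemma flat_thin_vertical m v th i j h p q :
  0 <= th -> Cnorm v < 1/3 ->
  Cnorm (slope m (square_center i j) (square_center i j)) / 2
    <= Rabs (fst (slope m (square_center i j) (square_center i j))) ->
  flat_set m v th p -> flat_set m v th q -> in_square i j p -> in_square i j q ->
  Rabs (fst q - fst p) <= h -> Rabs (snd q - snd p) <= 8 * th * Kdist + 5 * h.
Proof.
  intros Hth Hv Hre Fp Fq Sp Sq Hh.
  assert (Hz3 : Cadd p (Cmul (snd q - snd p, 0) (0, 1)) = (fst p, snd q)) by cx_ring.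
  apply (transversal_bound m v th (square_center i j) (0, 1) _ _ p q); auto using in_square_near.
  - exact (square_center_small i j p Sp (proj1 Fp)).
  - rewrite Cnorm_imag. apply Rabs_R1.
  - replace (snd (Cmul (0, 1) _)) with (fst (slope m (square_center i j) (square_center i j)))
      by (unfold Cmul; simpl; ring). exact Hre.
  - rewrite Hz3. apply in_square_near. destruct Sp, Sq. split; simpl; auto.
  - rewrite Hz3. replace (Csub q (fst p, snd q)) with (fst q - fst p, 0) by cx_ring.
    rewrite Cnorm_real. exact Hh.
Qed.

Lemma flat_thin_horizontal m v th i j h p q :
  0 <= th -> Cnorm v < 1/3 ->
  Cnorm (slope m (square_center i j) (square_center i j)) / 2
    <= Rabs (snd (slope m (square_center i j) (square_center i j))) ->
  flat_set m v th p -> flat_set m v th q -> in_square i j p -> in_square i j q ->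
  Rabs (snd q - snd p) <= h -> Rabs (fst q - fst p) <= 8 * th * Kdist + 5 * h.
Proof.
  intros Hth Hv Him Fp Fq Sp Sq Hh.
  assert (Hz3 : Cadd p (Cmul (fst q - fst p, 0) (1, 0)) = (fst q, snd p)) by cx_ring.
  apply (transversal_bound m v th (square_center i j) (1, 0) _ _ p q); auto using in_square_near.
  - exact (square_center_small i j p Sp (proj1 Fp)).
  - rewrite Cnorm_real. apply Rabs_R1.
  - replace (snd (Cmul (1, 0) _)) with (snd (slope m (square_center i j) (square_center i j)))
      by (unfold Cmul; simpl; ring). exact Him.
  - rewrite Hz3. apply in_square_near. destruct Sp, Sq. split; simpl; auto.
  - rewrite Hz3. replace (Csub q (fst q, snd p)) with (0, snd q - snd p) by cx_ring.
    rewrite Cnorm_imag. exact Hh.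
Qed.

Lemma width_pos N : (0 < N)%nat -> 0 < width N.
Proof. intros HN. unfold width, cell. apply Rdiv_lt_0_compat; [lra | apply lt_0_INR; lia]. Qed.

Lemma width_total N : (0 < N)%nat -> INR N * width N = cell.
Proof. intros HN. unfold width. field. apply not_0_INR. lia. Qed.

(* The flat set within one square is covered by N rectangles, one per strip,
   of width [width N] and height [2 * thickness th N]; strips are vertical or
   horizontal according to which part of the local slope dominates. *)
Lemma square_cover m v th N i j : 0 <= th -> (0 < N)%nat -> Cnorm v < 1/3 ->
  rect_cover (fun p => flat_set m v th p /\ in_square i j p) N (width N * (2 * thickness th N)).
Proof.
  intros Hth HN Hv.
  pose proof (width_pos N HN) as Hw. pose proof (width_total N HN) as Htot.
  assert (Hthick : 8 * th * Kdist + 5 * width N < thickness th N) by (unfold thickness; lra).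
  assert (HthK : 0 <= th * Kdist) by (apply Rmult_le_pos; [lra | left; apply Kdist_pos]).
  assert (Harea : 0 <= width N * (2 * thickness th N)) by (apply Rmult_le_pos; lra).
  destruct (Re_or_Im_large (slope m (square_center i j) (square_center i j))) as [Hre|Him].
  - apply rect_cover_union1 with (fun l p => flat_set m v th p /\ in_square i j p /\
      grid_lo i + INR l * width N <= fst p < grid_lo i + (INR l + 1) * width N).
    + intros l _.
      apply rect_cover_anchored with (fun q => Rect (grid_lo i + INR l * width N)
        (grid_lo i + (INR l + 1) * width N) (snd q - thickness th N) (snd q + thickness th N));
        [exact Harea | intros q; unfold proper_rect, rect_area; simpl; split; [lra | ring] |].
      intros q p [Fq [Sq Bq]] [Fp [Sp Bp]]. split; [exact Bp|]. simpl.
      assert (Hclose : Rabs (fst q - fst p) <= width N) by (apply Rabs_le; lra).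
      pose proof (flat_thin_vertical m v th i j (width N) p q Hth Hv Hre Fp Fq Sp Sq Hclose) as Hthin.
      pose proof (Rabs_def2 _ _ (Rle_lt_trans _ _ _ Hthin Hthick)). lra.
    + intros p [Fp Sp].
      destruct (grid_index N (fst p - grid_lo i) (width N) Hw) as [l [Hl Hb]];
        [destruct Sp; lra|].
      exists l. split; [exact Hl | split; [exact Fp | split; [exact Sp | lra]]].
  - apply rect_cover_union1 with (fun l p => flat_set m v th p /\ in_square i j p /\
      grid_lo j + INR l * width N <= snd p < grid_lo j + (INR l + 1) * width N).
    + intros l _.
      apply rect_cover_anchored with (fun q => Rect (fst q - thickness th N) (fst q + thickness th N)
        (grid_lo j + INR l * width N) (grid_lo j + (INR l + 1) * width N));
        [exact Harea | intros q; unfold proper_rect, rect_area; simpl; split; [lra | ring] |].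
      intros q p [Fq [Sq Bq]] [Fp [Sp Bp]]. split; [|exact Bp]. simpl.
      assert (Hclose : Rabs (snd q - snd p) <= width N) by (apply Rabs_le; lra).
      pose proof (flat_thin_horizontal m v th i j (width N) p q Hth Hv Him Fp Fq Sp Sq Hclose) as Hthin.
      pose proof (Rabs_def2 _ _ (Rle_lt_trans _ _ _ Hthin Hthick)). lra.
    + intros p [Fp Sp].
      destruct (grid_index N (snd p - grid_lo j) (width N) Hw) as [l [Hl Hb]];
        [destruct Sp; lra|].
      exists l. split; [exact Hl | split; [exact Fp | split; [exact Sp | lra]]].
Qed.

Lemma flat_cover m v th N : 0 <= th -> (0 < N)%nat -> Cnorm v < 1/3 ->
  rect_cover (flat_set m v th) (grid_size * (grid_size * N)) (width N * (2 * thickness th N)).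
Proof.
  intros Hth HN Hv.
  assert (Hgrid : forall t, Rabs t < 1/3 ->
            exists i, (i < grid_size)%nat /\ grid_lo i <= t < grid_lo i + cell).
  { intros t Ht. apply Rabs_def2 in Ht.
    destruct (grid_index grid_size (t + 1/2) cell) as [i [Hi Hb]];
      [unfold cell; lra | rewrite INR_grid_size; unfold cell; lra |].
    exists i. split; [exact Hi | unfold grid_lo; lra]. }
  apply rect_cover_union with (fun i p => flat_set m v th p /\ grid_lo i <= fst p < grid_lo i + cell).
  - intros i _. apply rect_cover_union with (fun j p => flat_set m v th p /\ in_square i j p).
    + intros j _. apply square_cover; auto.
    + intros p [Fp Bx].
      destruct (Hgrid (snd p)) as [j [Hj By]]; [pose proof (Cnorm_snd p); destruct Fp; lra|].
      exists j. split; [exact Hj | split; [exact Fp | split; [exact Bx | exact By]]].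
  - intros p Fp.
    destruct (Hgrid (fst p)) as [i [Hi Bx]]; [pose proof (Cnorm_fst p); destruct Fp; lra|].
    exists i. split; [exact Hi | split; [exact Fp | exact Bx]].
Qed.

Lemma flat_set_small eps : 0 < eps ->
  exists th, 0 < th /\ forall m v, Cnorm v < 1/3 -> m2_lt (flat_set m v th) eps.
Proof.
  intros Heps. pose proof Kdist_pos as HK.
  destruct (INR_unbounded (48 / eps)) as [N HN].
  assert (HepsN : 48 < eps * INR N).
  { replace 48 with (eps * (48 / eps)) by (field; lra). apply Rmult_lt_compat_l; lra. }
  assert (HNr : 0 < INR N) by nra.
  assert (HN0 : (0 < N)%nat) by (apply INR_lt; simpl; lra).
  set (th := eps / (64000 * Kdist)).
  assert (Hth : 0 < th) by (apply Rdiv_lt_0_compat; nra).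
  exists th. split; [exact Hth|]. intros m v Hv.
  apply rect_cover_measure
    with (grid_size * (grid_size * N))%nat (width N * (2 * thickness th N));
    [apply flat_cover; auto; lra|].
  rewrite !mult_INR, INR_grid_size.
  replace (1000 * (1000 * INR N) * (width N * (2 * thickness th N))) with (eps / 4 + 12 / INR N)
    by (unfold thickness, width, cell, th; field; lra).
  assert (H12 : 12 / INR N < eps / 2).
  { apply Rmult_lt_reg_l with (INR N); [exact HNr|].
    replace (INR N * (12 / INR N)) with 12 by (field; lra). nra. }
  lra.
Qed.

Lemma sin_abs_le t : Rabs (sin t) <= Rabs t.
Proof.
  assert (Hpos : forall s, 0 <= s -> Rabs (sin s) <= s).
  { intros s Hs. destruct (Req_dec s 0) as [->|Hs0]; [rewrite sin_0, Rabs_R0; lra|].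
    pose proof (sin_lt_x s ltac:(lra)). pose proof (SIN_bound s).
    destruct (Rle_dec s PI) as [HsPI|HsPI].
    - pose proof (sin_ge_0 s Hs HsPI). rewrite Rabs_pos_eq; lra.
    - pose proof PI2_1. unfold Rabs; destruct (Rcase_abs (sin s)); lra. }
  destruct (Rle_dec 0 t) as [Ht|Ht].
  - rewrite (Rabs_pos_eq t) by lra. auto.
  - replace t with (- (-t)) by ring. rewrite sin_neg, !Rabs_Ropp, (Rabs_left t) by lra.
    apply Hpos; lra.
Qed.

Lemma small_arg_flat z th : abs_arg_lt z th -> Rabs (snd z) <= th * Cnorm z.
Proof.
  intros [t [_ [Ht [_ Hsnd]]]].
  rewrite Hsnd, Rabs_mult, (Rabs_pos_eq (Cnorm z)) by apply Cnorm_nonneg.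
  pose proof (sin_abs_le t). pose proof (Cnorm_nonneg z). nra.
Qed.

(* If the complement of U is confined near 0 to the sector |arg z| < th, then
   for m large every z of D(0,1/3) whose displacement from the orbit of v
   leaves U lies in the flat set: the iterates contract to 0 geometrically. *)
Lemma outside_petal_flat (U : Cx -> Prop) th r m v z :
  (forall w, Cdisc Czero r w -> ~ U w -> w = Czero \/ (w <> Czero /\ abs_arg_lt w th)) ->
  (7/10)^m < r -> Cnorm v < 1/3 -> Cnorm z < 1/3 -> ~ U (disp m v z) ->
  flat_set m v th z.
Proof.
  intros Hcone Hm Hv Hz Hout. split; [exact Hz|].
  assert (Hsmall : Cnorm (disp m v z) < r).
  { unfold disp. pose proof (Cnorm_sub_le (orbit m z) (orbit m v)).
    pose proof (orbit_contract m z ltac:(lra)). pose proof (orbit_contract m v ltac:(lra)).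
    pose proof (pow_le (7/10) m). pose proof (Cnorm_nonneg z). pose proof (Cnorm_nonneg v). nra. }
  destruct (Hcone (disp m v z)) as [Hzero|[_ Harg]]; [apply Cdisc_origin, Hsmall | exact Hout | |].
  - rewrite Hzero. unfold Czero; simpl. rewrite Rabs_R0, Cnorm_real, Rabs_R0. lra.
  - apply small_arg_flat, Harg.
Qed.

(* Lemma 2.2: choose th from [flat_set_small], r from the cusp of U2 at 0,
   and m0 so that (7/10)^m0 < r; then [outside_petal_flat] applies. *)
Theorem lemma2p2 (U2 : Cx -> Prop) (HU : attracting_petal_P2 U2)
  (V : Cx -> Prop) (HVo : Cis_open V) (HVd : forall z, V z -> Cdisc Czero (1/3) z)
  (eps : R) (Heps : 0 < eps) :
  exists m0 : nat, forall m : nat, (m0 <= m)%nat ->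
    forall z0 : Cx, (exists v, V v /\ z0 = Nat.iter m P1 v) ->
      m2_lt (fun z => V z /\ ~ U2 (Csub (Nat.iter m P1 z) z0)) eps.
Proof.
  destruct HU as (_ & _ & _ & _ & _ & Hcusp).
  destruct (flat_set_small eps Heps) as [th [Hth Hsmall]].
  destruct (Hcusp th Hth) as [r [Hr Hcone]].
  destruct (pow_lt_1_zero (7/10) ltac:(rewrite Rabs_pos_eq; lra) r Hr) as [m0 Hm0].
  exists m0. intros m Hm z0 [v [Vv ->]].
  assert (Hv : Cnorm v < 1/3) by (apply Cdisc_origin, HVd, Vv).
  apply m2_lt_mono with (flat_set m v th); [|exact (Hsmall m v Hv)].
  intros z [Vz Hout].
  apply (outside_petal_flat U2 th r); auto.
  - specialize (Hm0 m Hm). rewrite Rabs_pos_eq in Hm0 by (apply pow_le; lra). exact Hm0.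
  - apply Cdisc_origin, HVd, Vz.
Qed.
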